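(* Let $\mathcal A\in\mathbb C^{n\times n}$ be nonsingular and suppose $\mathcal A=\mathcal P_1+\mathcal P_2$ with $\mathcal P_1,\mathcal P_2$ positive semidefinite, and let $\Sigma$ be Hermitian positive definite. Let $\tilde{\mathcal A}=\Sigma^{-1/2}\mathcal A\Sigma^{-1/2}$, $\tilde{\mathcal P}_i=\Sigma^{-1/2}\mathcal P_i\Sigma^{-1/2}$ ($i=1,2$), and $K=\tilde{\mathcal A}+\tilde{\mathcal P}_1^*\tilde{\mathcal P}_2^*\tilde{\mathcal A}$. If $K$ is positive definite, then the PPS method is convergent, i.e. $\rho(\Gamma_{\mathrm{PPS}})<1$, where $\Gamma_{\mathrm{PPS}}=(\Sigma+\mathcal P_1)^{-1}(\Sigma-\mathcal P_2)(\Sigma+\mathcal P_2)^{-1}(\Sigma-\mathcal P_1)$.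
   Context: A matrix $\mathcal P\in\mathbb C^{n\times n}$ is called positive semidefinite if $\mathcal P+\mathcal P^*$ is Hermitian positive semidefinite, and positive definite if $\mathcal P+\mathcal P^*$ is Hermitian positive definite; $\mathcal P$ need not be Hermitian. $\rho(\cdot)$ is the spectral radius; $\Sigma^{1/2}$ is the HPD square root of the HPD matrix $\Sigma$. The PPS method is the iteration $(\Sigma+\mathcal P_2)u^{k+1/2}=(\Sigma-\mathcal P_1)u^k+b$, $(\Sigma+\mathcal P_1)u^{k+1}=(\Sigma-\mathcal P_2)u^{k+1/2}+b$ for solving $\mathcal A u=b$; its iteration matrix is $\Gamma_{\mathrm{PPS}}$, and it converges for every initial guess iff $\rho(\Gamma_{\mathrm{PPS}})<1$. *)

(* complex numbers are algC (algebraic complex numbers,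
   a numClosedFieldType with conjugation conjC). *)
From HB Require Import structures.
From mathcomp Require Import all_boot all_order all_algebra algC.
Set Implicit Arguments. Unset Strict Implicit. Unset Printing Implicit Defensive.
Import Order.TTheory GRing.Theory Num.Theory.
Local Open Scope ring_scope.

Definition ctr (m n : nat) (M : 'M[algC]_(m, n)) : 'M[algC]_(n, m) :=
  (map_mx Num.conj M)^T.

Definition hermitian (n : nat) (H : 'M[algC]_n) : Prop := ctr H = H.

Definition hpsd (n : nat) (H : 'M[algC]_n) : Prop :=
  hermitian H /\ forall x : 'cV[algC]_n, 0 <= (ctr x *m H *m x) 0 0.

Definition hpd (n : nat) (H : 'M[algC]_n) : Prop :=
  hermitian H /\ forall x : 'cV[algC]_n, x != 0 -> 0 < (ctr x *m H *m x) 0 0.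

(* The paper's (possibly non-Hermitian) positive semidefinite / definite:
   P + P^* is Hermitian positive semidefinite / definite. *)
Definition psd (n : nat) (P : 'M[algC]_n) : Prop := hpsd (P + ctr P).
Definition pd (n : nat) (P : 'M[algC]_n) : Prop := hpd (P + ctr P).

(* rho(M) < 1 : every eigenvalue of M has modulus < 1 (the spectrum is finite,
   so this is exactly "the maximum modulus of the eigenvalues is < 1"). *)
Definition spectral_radius_lt1 (n : nat) (M : 'M[algC]_n) : Prop :=
  forall l : algC, eigenvalue M l -> `|l| < 1.

Definition Gamma_PPS (n : nat) (Sigma P1 P2 : 'M[algC]_n) : 'M[algC]_n :=
  invmx (Sigma + P1) *m (Sigma - P2) *m invmx (Sigma + P2) *m (Sigma - P1).

(* Let Gamma x = l x with x <> 0.  Eliminating the half-step iterate of the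
   PPS sweep gives 2 A x = (1 - l) (A x + Sigma x + P2 Sigma^-1 P1 x).  Pairing
   with A x in the Sigma^-1 inner product gives 2 c = (1 - l) (c + d), where
   c = (A x)^* Sigma^-1 (A x) > 0 and conj d = y^* K y with y = Sigma^(1/2) x,
   so Re d > 0.  Hence l = (d - c) / (d + c), and |d - c| < |d + c|. *)

From Pilot Require Import Defs.
From HB Require Import structures.
From mathcomp Require Import all_boot all_order all_algebra algC.
From mathcomp Require Import ring.
Import Order.TTheory GRing.Theory Num.Theory.
Local Open Scope ring_scope.
Set Implicit Arguments.
Unset Strict Implicit.

Lemma ctrK m n (M : 'M[algC]_(m, n)) : ctr (ctr M) = M.
Proof. by apply/matrixP => i j; rewrite !mxE conjCK. Qed.

Lemma ctrM m n p (A : 'M[algC]_(m, n)) (B : 'M[algC]_(n, p)) :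
  ctr (A *m B) = ctr B *m ctr A.
Proof. by rewrite /ctr map_mxM trmx_mul. Qed.

Lemma ctrD m n (A B : 'M[algC]_(m, n)) : ctr (A + B) = ctr A + ctr B.
Proof. by apply/matrixP => i j; rewrite !mxE rmorphD. Qed.

Lemma ctr_invmx n (A : 'M[algC]_n) : ctr (invmx A) = invmx (ctr A).
Proof. by rewrite /ctr map_invmx trmx_inv. Qed.

Lemma ctr_eq0 m n (A : 'M[algC]_(m, n)) : (ctr A == 0) = (A == 0).
Proof. by rewrite /ctr trmx_eq0 map_mx_eq0. Qed.

Lemma conj_form n (x y : 'cV[algC]_n) (H : 'M[algC]_n) :
  ((ctr x *m H *m y) 0 0)^* = (ctr y *m ctr H *m x) 0 0.
Proof.
have -> : ctr y *m ctr H *m x = ctr (ctr x *m H *m y) by rewrite !ctrM ctrK mulmxA.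
by rewrite !mxE.
Qed.

Lemma psd_form_ge0 n (P : 'M[algC]_n) (x : 'cV[algC]_n) : psd P ->
  0 <= (ctr x *m P *m x) 0 0 + ((ctr x *m P *m x) 0 0)^*.
Proof. by case=> _ /(_ x); rewrite mulmxDr mulmxDl mxE -conj_form. Qed.

Lemma pd_form_gt0 n (P : 'M[algC]_n) (x : 'cV[algC]_n) : pd P -> x != 0 ->
  0 < (ctr x *m P *m x) 0 0 + ((ctr x *m P *m x) 0 0)^*.
Proof. by case=> _ /(_ x) Px /Px; rewrite mulmxDr mulmxDl mxE -conj_form. Qed.

Lemma unitmx_of_form n (H : 'M[algC]_n) :
  (forall x : 'cV[algC]_n, x != 0 -> (ctr x *m H *m x) 0 0 != 0) ->
  H \in unitmx.
Proof.
move=> H_nondeg; rewrite unitmxE unitfE; apply/negP => /det0P [v v_neq0 vH].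
have := H_nondeg (ctr v); rewrite ctr_eq0 ctrK vH mul0mx mxE eqxx.
by move/(_ v_neq0).
Qed.

Lemma hpd_unitmx n (H : 'M[algC]_n) : hpd H -> H \in unitmx.
Proof. by case=> _ H_pos; apply: unitmx_of_form => x /H_pos /gt_eqF ->. Qed.

Lemma hpd_addr_psd_unitmx n (H P : 'M[algC]_n) : hpd H -> psd P -> H + P \in unitmx.
Proof.
move=> [_ H_pos] P_psd; apply: unitmx_of_form => x x_neq0.
have h_gt0 := H_pos x x_neq0; have q_ge0 := psd_form_ge0 x P_psd.
rewrite mulmxDr mulmxDl [_ 0 0]mxE; apply: contraTneq q_ge0 => /eqP.
rewrite addrC addr_eq0 => /eqP ->.
by rewrite rmorphN /= (geC0_conj (ltW h_gt0)) -opprD oppr_ge0 lt_geF ?addr_gt0.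
Qed.

Lemma hpd_invmx n (H : 'M[algC]_n) : hpd H -> hpd (invmx H).
Proof.
move=> H_hpd; have H_unit := hpd_unitmx H_hpd; case: H_hpd => H_herm H_pos.
split; first by rewrite /Defs.hermitian ctr_invmx H_herm.
move=> x x_neq0; have y_neq0 : invmx H *m x != 0.
  by apply: contraNneq x_neq0 => Hx0; rewrite -(mulKVmx H_unit x) Hx0 mulmx0.
have := H_pos _ y_neq0.
by rewrite ctrM ctr_invmx H_herm -!mulmxA mulKVmx.
Qed.

Lemma norm_lt1_of_cayley (C : numClosedFieldType) (c d l : C) :
  0 < c -> 0 < d + d^* -> 2 * c = (1 - l) * (c + d) -> `|l| < 1.
Proof.
move=> c_gt0 d_gt0 E.
have l_cd : l * (c + d) = d - c by apply: (addrI (2 * c)); rewrite {1}E; ring.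
have gap : `|c + d| ^+ 2 - `|d - c| ^+ 2 = 2 * c * (d + d^*).
  by rewrite !normCK rmorphD rmorphB /= (geC0_conj (ltW c_gt0)); ring.
have gap_gt0 : 0 < `|c + d| ^+ 2 - `|d - c| ^+ 2 by rewrite gap !mulr_gt0.
have cd_gt0 : 0 < `|c + d| ^+ 2.
  by apply: (lt_le_trans gap_gt0); rewrite gerBl exprn_ge0.
rewrite -(expr_lt1 (n := 2)) // -(ltr_pM2r cd_gt0) mul1r -exprMn -normrM l_cd.
by rewrite -subr_gt0.
Qed.

Lemma eigenvalue_col (F : fieldType) n (A : 'M[F]_n) a :
  eigenvalue A a -> exists2 x : 'cV[F]_n, x != 0 & A *m x = a *: x.
Proof.
move=> /eigenvalueP [v vA v_neq0].
have : \det (a%:M - A)^T == 0.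
  by rewrite det_tr; apply/det0P; exists v; rewrite // mulmxBr vA mul_mx_scalar subrr.
case/det0P => w w_neq0 /(congr1 trmx).
rewrite trmx_mul trmxK trmx0 mulmxBl mul_scalar_mx => /eqP; rewrite subr_eq0 => /eqP Aw.
by exists w^T; rewrite ?trmx_eq0.
Qed.

(* In the PPS sweep, s = Sigma w and t = P2 w for the half-step iterate w,
   a = Sigma x, b = P1 x and F = P2 Sigma^-1. *)
Lemma pps_eliminate_half_step (R : comNzRingType) m k (F : 'M[R]_m)
    (a b s t : 'M[R]_(m, k)) (l : R) :
  s + t = a - b -> s - t = l *: (a + b) -> F *m s = t ->
  2 *: (b + F *m a) = (1 - l) *: (b + F *m a + a + F *m b).
Proof.
move=> st_sum st_diff Fs.
have two_s : 2 *: s = (a - b) + l *: (a + b).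
  by rewrite -st_sum -st_diff; apply/matrixP => i j; rewrite !mxE; ring.
have two_t : 2 *: t = (a - b) - l *: (a + b).
  by rewrite -st_sum -st_diff; apply/matrixP => i j; rewrite !mxE; ring.
have two_Fs : 2 *: t = (F *m a - F *m b) + l *: (F *m a + F *m b).
  by rewrite -Fs scalemxAr two_s mulmxDr mulmxBr -scalemxAr mulmxDr.
move: two_Fs; rewrite two_t; move: (F *m a) (F *m b) => Fa Fb /eqP.
rewrite -subr_eq0 => /eqP E; apply/eqP; rewrite -subr_eq0 -oppr_eq0 opprB -E.
by apply/eqP/matrixP => i j; rewrite !mxE; ring.
Qed.

Lemma Gamma_PPS_eigenvector n (Sigma P1 P2 : 'M[algC]_n) (x : 'cV[algC]_n) l :
  Sigma \in unitmx -> Sigma + P1 \in unitmx -> Sigma + P2 \in unitmx ->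
  Gamma_PPS Sigma P1 P2 *m x = l *: x ->
  2 *: ((P1 + P2) *m x) =
    (1 - l) *: ((P1 + P2) *m x + (Sigma + P2 *m invmx Sigma *m P1) *m x).
Proof.
move=> Sigma_unit SP1_unit SP2_unit Gx.
set w := invmx (Sigma + P2) *m ((Sigma - P1) *m x).
have half1 : Sigma *m w + P2 *m w = Sigma *m x - P1 *m x.
  by rewrite -mulmxDl -mulmxBl mulKVmx.
have half2 : Sigma *m w - P2 *m w = l *: (Sigma *m x + P1 *m x).
  by rewrite -mulmxBl -mulmxDl scalemxAr -Gx /Gamma_PPS -!mulmxA mulKVmx.
have F_Sigma (y : 'cV_n) : P2 *m invmx Sigma *m (Sigma *m y) = P2 *m y.
  by rewrite -mulmxA mulKmx.
have := pps_eliminate_half_step half1 half2 (F_Sigma w).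
by rewrite F_Sigma !mulmxDl addrA mulmxA.
Qed.

Lemma invmx_mul n (A B : 'M[algC]_n) : A \in unitmx -> B \in unitmx ->
  invmx (A *m B) = invmx B *m invmx A.
Proof.
move=> A_unit B_unit; have AB_unit : A *m B \in unitmx by rewrite unitmx_mul A_unit.
rewrite -[RHS]mul1mx -(mulVmx AB_unit) -!mulmxA.
by rewrite mulKVmx // mulmxV // mulmx1.
Qed.

Definition pps_Kmx n (Sigma A P1 P2 : 'M[algC]_n) : 'M[algC]_n :=
  A + ctr P1 *m invmx Sigma *m ctr P2 *m invmx Sigma *m A.

Lemma K_congruence n (S Sigma A P1 P2 : 'M[algC]_n) :
  S \in unitmx -> ctr S = S -> S *m S = Sigma ->
  let T := invmx S in
  S *m (T *m A *m T + ctr (T *m P1 *m T) *m ctr (T *m P2 *m T) *m (T *m A *m T)) *m S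
  = pps_Kmx Sigma A P1 P2.
Proof.
move=> S_unit S_herm <- T; rewrite /pps_Kmx.
have T_herm : ctr T = T by rewrite ctr_invmx S_herm.
rewrite invmx_mul // !ctrM T_herm mulmxDr mulmxDl -!mulmxA.
by rewrite !mulKVmx // !mulVmx // !mulmx1.
Qed.

Lemma pps_Kmx_form n (Sigma A P1 P2 : 'M[algC]_n) (x : 'cV[algC]_n) :
  Sigma \in unitmx -> ctr Sigma = Sigma ->
  let M := invmx Sigma in
  ctr ((Sigma + P2 *m M *m P1) *m x) *m M *m (A *m x)
  = ctr x *m pps_Kmx Sigma A P1 P2 *m x.
Proof.
move=> Sigma_unit Sigma_herm M; rewrite /pps_Kmx -/M.
have M_herm : ctr M = M by rewrite ctr_invmx Sigma_herm.
by rewrite !ctrM ctrD !ctrM Sigma_herm M_herm !mulmxDr !mulmxDl -!mulmxA mulKVmx.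
Qed.

Unset Implicit Arguments.
Theorem corollary3p5 (n : nat) (A P1 P2 Sigma S : 'M[algC]_n) :
  A \in unitmx ->
  A = P1 + P2 -> psd P1 -> psd P2 ->
  hpd Sigma -> hpd S -> S *m S = Sigma ->
  let At := invmx S *m A *m invmx S in
  let P1t := invmx S *m P1 *m invmx S in
  let P2t := invmx S *m P2 *m invmx S in
  let K := At + ctr P1t *m ctr P2t *m At in
  pd K ->
  spectral_radius_lt1 (Gamma_PPS Sigma P1 P2).
Proof.
move=> A_unit A_split P1_psd P2_psd Sigma_hpd S_hpd S_sqrt At P1t P2t K K_pd.
move=> l /eigenvalue_col [x x_neq0 Gx].
have Sigma_unit := hpd_unitmx Sigma_hpd.
have S_unit := hpd_unitmx S_hpd.
set M := invmx Sigma; set u := A *m x; set y := (Sigma + P2 *m M *m P1) *m x.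
have E : 2 *: u = (1 - l) *: (u + y).
  by rewrite /u A_split; apply: Gamma_PPS_eigenvector => //; apply: hpd_addr_psd_unitmx.
set c := (ctr u *m M *m u) 0 0; set d := (ctr u *m M *m y) 0 0.
have cd_eq : 2 * c = (1 - l) * (c + d).
  have := congr1 (fun v => (ctr u *m M *m v) 0 0) E.
  by rewrite /= -!scalemxAr mulmxDr ![fun_of_matrix (_ *: _) _ _]mxE
    [fun_of_matrix (_ + _) _ _]mxE.
have [M_herm M_pos] := hpd_invmx Sigma_hpd.
have c_gt0 : 0 < c.
  apply: M_pos; apply: contraNneq x_neq0 => u0.
  by rewrite -(mulKmx A_unit x) -/u u0 mulmx0.
have d_conj : d^* = (ctr x *m pps_Kmx Sigma A P1 P2 *m x) 0 0.
  by rewrite conj_form M_herm pps_Kmx_form ?(proj1 Sigma_hpd).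
have K_form : ctr (S *m x) *m K *m (S *m x) = ctr x *m pps_Kmx Sigma A P1 P2 *m x.
  rewrite -(K_congruence A P1 P2 S_unit (proj1 S_hpd) S_sqrt).
  by rewrite ctrM (proj1 S_hpd) /K /At /P1t /P2t !mulmxA.
have Sx_neq0 : S *m x != 0.
  by apply: contraNneq x_neq0 => Sx0; rewrite -(mulKmx S_unit x) Sx0 mulmx0.
have := pd_form_gt0 K_pd Sx_neq0; rewrite K_form -d_conj conjCK addrC => d_gt0.
exact: norm_lt1_of_cayley c_gt0 d_gt0 cd_eq.
Qed.
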